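(* Let $d\ge2$ be an integer and $R>0$. There exists $R'>0$ depending only on $R$ (and $d$) such that the following holds: whenever $D_1,\dots,D_d$ are real numbers with $|D_i|\le R$ for all $i$, $D=\sum_iD_i$, and $(\lambda,L)\in\mathbb{R}\times C^1([0,1];\mathbb{R}^d)$ satisfies $$(d-1)\lambda=\sum_{i=1}^dL_i(0)^2-\Big(\sum_{i=1}^dL_i(0)\Big)^2,\qquad L_i'=-\Big(\sum_{k=1}^dL_k\Big)L_i-\lambda\ \text{ on }[0,1],\qquad\int_0^1L_i=D_i$$ for $i=1,\dots,d$, then $|\lambda|<R'$ and $|L_i(r)|<R'$ for all $r\in[0,1]$ and $i=1,\dots,d$. *)

From Stdlib Require Import Reals Lra Lia.
From Coquelicot Require Import Coquelicot.
Open Scope R_scope.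

Fixpoint sum_lt (d : nat) (f : nat -> R) : R :=
  match d with
  | O => 0
  | S n => sum_lt n f + f n
  end.

Definition is_deriv_01 (f : R -> R) (r l : R) : Prop :=
  filterlim (fun h => (f (r + h) - f r) / h)
    (within (fun h => h <> 0 /\ 0 <= r + h <= 1) (locally 0))
    (locally l).

Definition C1_01 (f f' : R -> R) : Prop :=
  (forall r, 0 <= r <= 1 -> is_deriv_01 f r (f' r)) /\
  (forall r, 0 <= r <= 1 ->
     filterlim f' (within (fun t => 0 <= t <= 1) (locally r)) (locally (f' r))).

From Stdlib Require Import Reals Lra Lia.
From Coquelicot Require Import Coquelicot.
Open Scope R_scope.

(* Write S = sum_k L_k.  Summing the equations gives the Riccati equation
   S' = - S^2 - d lam, and sum_k L_k^2 - S^2 is a first integral, equal to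
   (d - 1) lam by the initial condition.  With Cauchy-Schwarz this yields
   d lam >= - S^2, so S is nonincreasing; its mean sum_k D_k is attained,
   whence d lam >= - (sum_k D_k)^2.
   The deviations u_j = L_j - S/d all solve u' = - S u, so they are
   proportional: the one largest at 0, normalised to v > 0, dominates all of
   them, and the first integral turns this into S <= d v + d R.  Then
   v exp (d int_0^x v + d R x) is nondecreasing, which bounds v(0), hence S(0),
   by the integral of v, that is by the D_k.  The time reversal
   r |-> - L(1 - r) bounds - S(1) in the same way.  So S is bounded on [0,1],
   and the first integral and the Riccati equation then bound lam and the L_i. *)

Lemma sum_lt_ext n f g :
  (forall k, (k < n)%nat -> f k = g k) -> sum_lt n f = sum_lt n g.
Proof.
  induction n as [|n IH]; intros Hfg; simpl; [reflexivity|].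
  rewrite IH, Hfg; auto with arith.
Qed.

Lemma sum_lt_plus n f g : sum_lt n (fun k => f k + g k) = sum_lt n f + sum_lt n g.
Proof. induction n as [|n IH]; simpl; [ring|rewrite IH; ring]. Qed.

Lemma sum_lt_scal n c f : sum_lt n (fun k => c * f k) = c * sum_lt n f.
Proof. induction n as [|n IH]; simpl; [ring|rewrite IH; ring]. Qed.

Lemma sum_lt_opp n f : sum_lt n (fun k => - f k) = - sum_lt n f.
Proof. induction n as [|n IH]; simpl; [ring|rewrite IH; ring]. Qed.

Lemma sum_lt_const n c : sum_lt n (fun _ => c) = INR n * c.
Proof. induction n as [|n IH]; cbn [sum_lt]; [simpl; ring|rewrite IH, S_INR; ring]. Qed.

Lemma sum_lt_le n f g :
  (forall k, (k < n)%nat -> f k <= g k) -> sum_lt n f <= sum_lt n g.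
Proof.
  induction n as [|n IH]; intros Hfg; simpl; [lra|].
  apply Rplus_le_compat; auto with arith.
Qed.

Lemma sum_lt_nonneg n f : (forall k, (k < n)%nat -> 0 <= f k) -> 0 <= sum_lt n f.
Proof.
  intros Hf. rewrite <- (Rmult_0_r (INR n)), <- sum_lt_const. now apply sum_lt_le.
Qed.

Lemma le_sum_lt n f i :
  (i < n)%nat -> (forall k, (k < n)%nat -> 0 <= f k) -> f i <= sum_lt n f.
Proof.
  induction n as [|n IH]; intros Hi Hf; simpl; [lia|].
  destruct (Nat.eq_dec i n) as [->|Hne].
  - assert (0 <= sum_lt n f) by (apply sum_lt_nonneg; auto with arith). lra.
  - assert (f i <= sum_lt n f) by (apply IH; [lia|auto with arith]).
    assert (0 <= f n) by auto with arith. lra.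
Qed.

Lemma sum_lt_abs_le n f c :
  (forall k, (k < n)%nat -> Rabs (f k) <= c) -> Rabs (sum_lt n f) <= INR n * c.
Proof.
  induction n as [|n IH]; intros Hf; cbn [sum_lt].
  - simpl. rewrite Rabs_R0. lra.
  - rewrite S_INR. eapply Rle_trans; [apply Rabs_triang|].
    assert (Rabs (f n) <= c) by auto with arith.
    assert (Rabs (sum_lt n f) <= INR n * c) by (apply IH; auto with arith). lra.
Qed.

Lemma sum_lt_abs_sub_mean_le n f c i : (0 < n)%nat -> (i < n)%nat ->
  (forall k, (k < n)%nat -> Rabs (f k) <= c) -> Rabs (f i - sum_lt n f / INR n) <= 2 * c.
Proof.
  intros Hn Hi Hf. assert (0 < INR n) by (apply lt_0_INR; lia).
  assert (Hmean : Rabs (sum_lt n f / INR n) <= c).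
  { unfold Rdiv. rewrite Rabs_mult, Rabs_inv, (Rabs_pos_eq (INR n)) by lra.
    apply (Rmult_le_reg_l (INR n)); [lra|]. field_simplify; [|lra]. now apply sum_lt_abs_le. }
  eapply Rle_trans; [apply Rabs_triang|]. rewrite Rabs_Ropp. specialize (Hf i Hi). lra.
Qed.

Lemma sum_lt_sq_sub_mean n f : (0 < n)%nat ->
  sum_lt n (fun k => (f k - sum_lt n f / INR n) ^ 2)
  = sum_lt n (fun k => f k ^ 2) - sum_lt n f ^ 2 / INR n.
Proof.
  intros Hn. assert (0 < INR n) by (apply lt_0_INR; lia).
  set (m := sum_lt n f / INR n).
  rewrite (sum_lt_ext _ _ (fun k => f k ^ 2 + ((-2 * m) * f k + m ^ 2))) by (intros; ring).
  rewrite !sum_lt_plus, sum_lt_scal, sum_lt_const. unfold m. field. lra.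
Qed.

Lemma sum_lt_Cauchy_Schwarz n f : sum_lt n f ^ 2 <= INR n * sum_lt n (fun k => f k ^ 2).
Proof.
  destruct n as [|n]; [simpl; lra|].
  assert (Hn : 0 < INR (S n)) by (apply lt_0_INR; lia).
  assert (Hvar : 0 <= sum_lt (S n) (fun k => (f k - sum_lt (S n) f / INR (S n)) ^ 2))
    by (apply sum_lt_nonneg; intros; apply pow2_ge_0).
  rewrite sum_lt_sq_sub_mean in Hvar by lia.
  replace (sum_lt (S n) f ^ 2) with (INR (S n) * (sum_lt (S n) f ^ 2 / INR (S n))) by (field; lra).
  apply Rmult_le_compat_l; lra.
Qed.

Lemma exists_max_lt n (a : nat -> R) :
  (0 < n)%nat -> exists i, (i < n)%nat /\ forall j, (j < n)%nat -> a j <= a i.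
Proof.
  induction n as [|n IH]; intros Hn; [lia|].
  destruct (Nat.eq_dec n 0) as [->|Hn0].
  - exists 0%nat. split; [lia|]. intros j Hj. replace j with 0%nat by lia. lra.
  - destruct IH as [i [Hi Hmax]]; [lia|].
    destruct (Rle_lt_dec (a n) (a i)).
    + exists i. split; [lia|]. intros j Hj.
      destruct (Nat.eq_dec j n) as [->|]; [lra|apply Hmax; lia].
    + exists n. split; [lia|]. intros j Hj.
      destruct (Nat.eq_dec j n) as [->|]; [lra|]. specialize (Hmax j ltac:(lia)). lra.
Qed.

Definition sum_fun (n : nat) (f : nat -> R -> R) (x : R) : R := sum_lt n (fun k => f k x).

Lemma is_derive_sum_fun n (f f' : nat -> R -> R) x :
  (forall k, (k < n)%nat -> is_derive (f k) x (f' k x)) ->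
  is_derive (sum_fun n f) x (sum_fun n f' x).
Proof.
  unfold sum_fun. induction n as [|n IH]; intros Hf; cbn [sum_lt].
  - exact (is_derive_const 0 x).
  - apply (is_derive_plus (V:=R_NormedModule)); auto with arith.
Qed.

Lemma continuous_sum_fun n (f : nat -> R -> R) x :
  (forall k, (k < n)%nat -> continuous (f k) x) -> continuous (sum_fun n f) x.
Proof.
  unfold sum_fun. induction n as [|n IH]; intros Hf; cbn [sum_lt].
  - apply continuous_const.
  - apply (continuous_plus (V:=R_NormedModule)); auto with arith.
Qed.

Lemma is_RInt_sum_fun n (f : nat -> R -> R) (I : nat -> R) a b :
  (forall k, (k < n)%nat -> is_RInt (f k) a b (I k)) -> is_RInt (sum_fun n f) a b (sum_lt n I).
Proof.
  unfold sum_fun. induction n as [|n IH]; intros Hf; cbn [sum_lt].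
  - pose proof (is_RInt_const a b 0) as H0.
    unfold scal in H0; simpl in H0; unfold mult in H0; simpl in H0.
    now rewrite Rmult_0_r in H0.
  - apply (is_RInt_plus (V:=R_NormedModule)); auto with arith.
Qed.

Ltac solve_continuous :=
  cbn [pow];
  repeat match goal with
  | |- continuous (fun _ => ?c) _ => apply continuous_const
  | |- continuous (fun x => x) _ => apply continuous_id
  | |- continuous (fun x => @?f x + @?g x) _ => apply (continuous_plus (V:=R_NormedModule))
  | |- continuous (fun x => @?f x - @?g x) _ => apply (continuous_minus (V:=R_NormedModule))
  | |- continuous (fun x => - @?f x) _ => apply (continuous_opp (V:=R_NormedModule))
  | |- continuous (fun x => @?f x * @?g x) _ => apply (continuous_mult (K:=R_AbsRing))
  | |- continuous (fun x => exp (@?f x)) _ => apply continuous_exp_comp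
  | |- continuous (Rmult ?c) _ => apply (continuous_mult (K:=R_AbsRing) (fun _ => c) (fun x => x))
  | |- continuous _ _ => solve [auto]
  end.

(* [auto_derive] treats the unknown functions as opaque and leaves [ex_derive f x]
   and [Derive f x] for them; both are supplied by [is_derive] hypotheses. *)
Ltac derive_with_hyps :=
  auto_derive;
  repeat match goal with
  | |- _ /\ _ => split
  | |- True => exact I
  | |- ex_derive _ _ => eexists; eassumption
  | |- context [Derive ?f ?x] => erewrite (is_derive_unique f x) by eassumption
  end.

Lemma derive_nonpos_le (g g' : R -> R) a b : a <= b ->
  (forall x, continuous g x) ->
  (forall x, a < x < b -> is_derive g x (g' x)) ->
  (forall x, a < x < b -> g' x <= 0) -> g b <= g a.
Proof.
  intros Hab Hc Hd Hneg.
  (* [Rmin (g' x) 0] agrees with [g'] inside [(a, b)] and is nonpositive at the endpoints too *)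
  destruct (MVT_gen g a b (fun x => Rmin (g' x) 0)) as [c [_ Hc']]; cbv zeta in *.
  - rewrite Rmin_left, Rmax_right by lra. intros x Hx.
    rewrite Rmin_left by (apply Hneg; lra). now apply Hd.
  - intros x _. apply continuity_pt_filterlim, Hc.
  - pose proof (Rmin_r (g' c) 0). nra.
Qed.

Lemma derive_nonneg_le (g g' : R -> R) a b : a <= b ->
  (forall x, continuous g x) ->
  (forall x, a < x < b -> is_derive g x (g' x)) ->
  (forall x, a < x < b -> 0 <= g' x) -> g a <= g b.
Proof.
  intros Hab Hc Hd Hpos.
  enough (- g b <= - g a) by lra.
  apply (derive_nonpos_le (fun x => - g x) (fun x => - g' x)); [assumption| | |].
  - intros x. solve_continuous.
  - intros x Hx. specialize (Hd x Hx). derive_with_hyps. ring.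
  - intros x Hx. specialize (Hpos x Hx). lra.
Qed.

Section LinearODE.

Variables (a : R -> R) (M : R).
Hypothesis a_bounded : forall x, 0 < x < 1 -> Rabs (a x) <= M.

Lemma linear_ode_sq_bounds (z : R -> R) :
  (forall x, continuous z x) ->
  (forall x, 0 < x < 1 -> is_derive z x (a x * z x)) ->
  forall x, 0 <= x <= 1 ->
    z x ^ 2 <= z 0 ^ 2 * exp (2 * M * x) /\ z 0 ^ 2 <= z x ^ 2 * exp (2 * M * x).
Proof.
  intros Hc Hd x Hx.
  assert (Hweighted : forall k y, 0 < y < 1 ->
    is_derive (fun t => z t ^ 2 * exp (k * t)) y ((2 * a y + k) * z y ^ 2 * exp (k * y))).
  { intros k y Hy. specialize (Hd y Hy). derive_with_hyps. simpl. ring. }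
  split.
  - assert (Hdecay : z x ^ 2 * exp (- (2 * M) * x) <= z 0 ^ 2 * exp (- (2 * M) * 0)).
    { apply (derive_nonpos_le (fun t => z t ^ 2 * exp (- (2 * M) * t))
             (fun t => (2 * a t - 2 * M) * z t ^ 2 * exp (- (2 * M) * t)) 0 x);
        [lra| |intros; apply Hweighted; lra|].
      - intros y. solve_continuous.
      - intros y Hy. specialize (a_bounded y ltac:(lra)). apply Rabs_le_between in a_bounded.
        pose proof (pow2_ge_0 (z y)). pose proof (exp_pos (- (2 * M) * y)).
        apply Rmult_le_0_r; [|lra]. apply Rmult_le_0_r; lra. }
    rewrite Rmult_0_r, exp_0, Rmult_1_r in Hdecay.
    apply (Rmult_le_compat_r (exp (2 * M * x))) in Hdecay; [|left; apply exp_pos].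
    rewrite Rmult_assoc, <- exp_plus in Hdecay.
    replace (- (2 * M) * x + 2 * M * x) with 0 in Hdecay by ring.
    now rewrite exp_0, Rmult_1_r in Hdecay.
  - assert (Hgrowth : z 0 ^ 2 * exp (2 * M * 0) <= z x ^ 2 * exp (2 * M * x)).
    { apply (derive_nonneg_le (fun t => z t ^ 2 * exp (2 * M * t))
             (fun t => (2 * a t + 2 * M) * z t ^ 2 * exp (2 * M * t)) 0 x);
        [lra| |intros; apply Hweighted; lra|].
      - intros y. solve_continuous.
      - intros y Hy. specialize (a_bounded y ltac:(lra)). apply Rabs_le_between in a_bounded.
        pose proof (pow2_ge_0 (z y)). pose proof (exp_pos (2 * M * y)).
        apply Rmult_le_pos; [|lra]. apply Rmult_le_pos; lra. }
    now rewrite Rmult_0_r, exp_0, Rmult_1_r in Hgrowth.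
Qed.

Lemma linear_ode_eq0 (z : R -> R) :
  (forall x, continuous z x) ->
  (forall x, 0 < x < 1 -> is_derive z x (a x * z x)) ->
  z 0 = 0 -> forall x, 0 <= x <= 1 -> z x = 0.
Proof.
  intros Hc Hd H0 x Hx.
  destruct (linear_ode_sq_bounds z Hc Hd x Hx) as [Hle _].
  rewrite H0 in Hle. simpl in Hle. rewrite !Rmult_0_l in Hle.
  destruct (Req_dec (z x) 0) as [|Hnz]; [assumption|].
  pose proof (pow2_gt_0 _ Hnz). lra.
Qed.

Lemma linear_ode_pos (z : R -> R) :
  (forall x, continuous z x) ->
  (forall x, 0 < x < 1 -> is_derive z x (a x * z x)) ->
  0 < z 0 -> forall x, 0 <= x <= 1 -> 0 < z x.
Proof.
  intros Hc Hd H0.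
  assert (Hnz : forall x, 0 <= x <= 1 -> z x <> 0).
  { intros x Hx Hzx. destruct (linear_ode_sq_bounds z Hc Hd x Hx) as [_ Hge].
    rewrite Hzx in Hge. simpl in Hge. rewrite !Rmult_0_l in Hge.
    pose proof (pow2_gt_0 (z 0) ltac:(lra)). lra. }
  intros x Hx. destruct (Rlt_le_dec 0 (z x)) as [|Hle]; [assumption|exfalso].
  destruct (IVT_gen z 0 x 0) as [c [Hcx Hzc]].
  - intros y. apply continuity_pt_filterlim, Hc.
  - rewrite Rmin_right, Rmax_left; lra.
  - rewrite Rmin_left, Rmax_right in Hcx by lra. apply (Hnz c); [lra|assumption].
Qed.

Lemma linear_ode_sq_le (y z : R -> R) :
  (forall x, continuous y x) -> (forall x, continuous z x) ->
  (forall x, 0 < x < 1 -> is_derive y x (a x * y x)) ->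
  (forall x, 0 < x < 1 -> is_derive z x (a x * z x)) ->
  Rabs (y 0) <= Rabs (z 0) -> forall x, 0 <= x <= 1 -> y x ^ 2 <= z x ^ 2.
Proof.
  intros Hcy Hcz Hdy Hdz H0 x Hx.
  destruct (Req_dec (z 0) 0) as [Hz0|Hz0].
  - assert (Hy0 : y 0 = 0)
      by (rewrite Hz0, Rabs_R0 in H0; apply Rabs_eq_0; apply Rle_antisym; [|apply Rabs_pos]; lra).
    rewrite (linear_ode_eq0 y Hcy Hdy Hy0 x Hx). simpl. rewrite Rmult_0_l. apply pow2_ge_0.
  - (* [y 0 * z - z 0 * y] solves the same equation and vanishes at 0,
       so [y] and [z] are proportional *)
    assert (Hprop : y 0 * z x - z 0 * y x = 0).
    { apply (linear_ode_eq0 (fun t => y 0 * z t - z 0 * y t)); [|intros t Ht|ring|assumption].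
      - intros t. solve_continuous.
      - specialize (Hdy t Ht). specialize (Hdz t Ht). derive_with_hyps. ring. }
    assert (Hsq : z 0 ^ 2 * y x ^ 2 = y 0 ^ 2 * z x ^ 2).
    { replace (z 0 ^ 2 * y x ^ 2) with ((z 0 * y x) ^ 2) by ring.
      replace (z 0 * y x) with (y 0 * z x) by lra. ring. }
    assert (y 0 ^ 2 <= z 0 ^ 2)
      by (rewrite <- (pow2_abs (y 0)), <- (pow2_abs (z 0)); pose proof (Rabs_pos (y 0)); nra).
    pose proof (pow2_gt_0 _ Hz0). pose proof (pow2_ge_0 (z x)).
    apply (Rmult_le_reg_l (z 0 ^ 2)); [assumption|]. rewrite Hsq. nra.
Qed.

End LinearODE.

Lemma exp_le x y : x <= y -> exp x <= exp y.
Proof. intros [Hlt|<-]; [left; now apply exp_increasing|right; reflexivity]. Qed.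

Lemma is_derive_RInt_0 (v : R -> R) x :
  (forall t, continuous v t) -> is_derive (fun y => RInt v 0 y) x (v x).
Proof.
  intros Hc. apply (is_derive_RInt v (fun y => RInt v 0 y) 0 x); [|apply Hc].
  apply filter_forall. intros y. apply (RInt_correct (V:=R_CompleteNormedModule)).
  apply (ex_RInt_continuous (V:=R_CompleteNormedModule)). intros; apply Hc.
Qed.

Lemma RInt_const_01 (c : R) : RInt (fun _ => c) 0 1 = c.
Proof. rewrite RInt_const. unfold scal; simpl; unfold mult; simpl. ring. Qed.

Section DecayBound.

Variables (v s : R -> R) (a K : R).
Hypothesis a_nonneg : 0 <= a.
Hypothesis K_nonneg : 0 <= K.
Hypothesis v_continuous : forall x, continuous v x.
Hypothesis v_derive : forall x, 0 < x < 1 -> is_derive v x (- s x * v x).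
Hypothesis v_pos : forall x, 0 <= x <= 1 -> 0 < v x.
Hypothesis s_le : forall x, 0 < x < 1 -> s x <= a * v x + K.

Lemma linear_ode_initial_le_at x : 0 <= x <= 1 ->
  v 0 <= v x * exp (a * RInt v 0 1 + K).
Proof.
  intros Hx. set (V := fun y => RInt v 0 y).
  assert (HV : forall y, is_derive V y (v y)) by (intros; now apply is_derive_RInt_0).
  assert (HVc : forall y, continuous V y)
    by (intros y; exact (ex_derive_continuous V y (ex_intro _ _ (HV y)))).
  assert (HV0 : V 0 = 0) by exact (RInt_point 0 v).
  assert (HV1 : V x <= V 1).
  { apply (derive_nonneg_le V v x 1); auto; [lra|]. intros y Hy. left; apply v_pos; lra. }
  (* [v * exp (a V + K x)] is nondecreasing because [s <= a v + K] *)
  assert (Hmono : v 0 * exp (a * V 0 + K * 0) <= v x * exp (a * V x + K * x)).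
  { apply (derive_nonneg_le (fun y => v y * exp (a * V y + K * y))
             (fun y => v y * exp (a * V y + K * y) * (a * v y + K - s y)) 0 x);
      [lra|intros y; solve_continuous| |].
    - intros y Hy. pose proof (v_derive y ltac:(lra)). pose proof (HV y).
      derive_with_hyps. ring.
    - intros y Hy. pose proof (s_le y ltac:(lra)). pose proof (v_pos y ltac:(lra)).
      pose proof (exp_pos (a * V y + K * y)).
      apply Rmult_le_pos; [apply Rmult_le_pos|]; lra. }
  rewrite HV0, !Rmult_0_r, Rplus_0_r, exp_0, Rmult_1_r in Hmono.
  eapply Rle_trans; [exact Hmono|].
  apply Rmult_le_compat_l; [left; apply v_pos; lra|]. apply exp_le. nra.
Qed.

Lemma linear_ode_initial_le c : RInt v 0 1 <= c -> v 0 <= c * exp (a * c + K).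
Proof.
  intros Hc. set (I := RInt v 0 1) in *. set (m := exp (a * I + K)).
  assert (Hm : 0 < m) by apply exp_pos.
  assert (Hv0 : 0 < v 0) by (apply v_pos; lra).
  assert (Hlow : v 0 / m <= I).
  { unfold I. rewrite <- (RInt_const_01 (v 0 / m)).
    apply RInt_le; [lra|apply ex_RInt_const| |].
    - apply (ex_RInt_continuous (V:=R_CompleteNormedModule)). intros; apply v_continuous.
    - intros x Hx. apply (Rmult_le_reg_r m); [lra|].
      unfold Rdiv. rewrite Rmult_assoc, Rinv_l, Rmult_1_r by lra.
      apply linear_ode_initial_le_at. lra. }
  assert (HI : v 0 <= I * m).
  { apply (Rmult_le_compat_r m) in Hlow; [|lra].
    unfold Rdiv in Hlow. now rewrite Rmult_assoc, Rinv_l, Rmult_1_r in Hlow by lra. }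
  assert (0 < I) by (pose proof (Rdiv_lt_0_compat _ _ Hv0 Hm); lra).
  eapply Rle_trans; [exact HI|].
  apply Rmult_le_compat; [lra|left; apply exp_pos|lra|]. apply exp_le. nra.
Qed.

End DecayBound.

Definition clamp01 (x : R) : R := Rmax 0 (Rmin 1 x).

Lemma clamp01_id x : 0 <= x <= 1 -> clamp01 x = x.
Proof. unfold clamp01, Rmax, Rmin. repeat destruct Rle_dec; lra. Qed.

Lemma clamp01_range x : 0 <= clamp01 x <= 1.
Proof. unfold clamp01, Rmax, Rmin. repeat destruct Rle_dec; lra. Qed.

Lemma clamp01_lipschitz x y : Rabs (clamp01 y - clamp01 x) <= Rabs (y - x).
Proof.
  unfold clamp01, Rmax, Rmin. repeat destruct Rle_dec; unfold Rabs; repeat destruct Rcase_abs; lra.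
Qed.

Lemma is_deriv_01_quotient f r l : is_deriv_01 f r l ->
  forall eps, 0 < eps -> exists delta, 0 < delta /\
    forall h, h <> 0 -> Rabs h < delta -> 0 <= r + h <= 1 ->
      Rabs ((f (r + h) - f r) / h - l) < eps.
Proof.
  intros Hf eps Heps. unfold is_deriv_01 in Hf. rewrite filterlim_locally in Hf.
  destruct (Hf (mkposreal eps Heps)) as [delta Hdelta].
  exists delta. split; [apply cond_pos|]. intros h Hh0 Hh Hr.
  apply (Hdelta h); [|split; assumption]. change (Rabs (h - 0) < delta). now rewrite Rminus_0_r.
Qed.

Lemma is_deriv_01_is_derive_clamp f r l : 0 < r < 1 -> is_deriv_01 f r l ->
  is_derive (fun x => f (clamp01 x)) r l.
Proof.
  intros Hr Hf. apply is_derive_Reals. intros eps Heps.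
  destruct (is_deriv_01_quotient f r l Hf eps Heps) as [delta [Hdelta Hq]].
  assert (Hpos : 0 < Rmin delta (Rmin r (1 - r))) by (repeat apply Rmin_pos; lra).
  exists (mkposreal _ Hpos). intros h Hh0 Hh. simpl in Hh.
  pose proof (Rmin_l delta (Rmin r (1 - r))). pose proof (Rmin_r delta (Rmin r (1 - r))).
  pose proof (Rmin_l r (1 - r)). pose proof (Rmin_r r (1 - r)).
  apply Rabs_def2 in Hh as [Hh1 Hh2].
  rewrite !clamp01_id by lra. apply Hq; [assumption|apply Rabs_def1|]; lra.
Qed.

Lemma is_deriv_01_continuous_clamp f f' :
  (forall r, 0 <= r <= 1 -> is_deriv_01 f r (f' r)) ->
  forall x, continuous (fun x => f (clamp01 x)) x.
Proof.
  intros Hf x. set (r := clamp01 x). pose proof (clamp01_range x) as Hr.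
  destruct (is_deriv_01_quotient f r (f' r) (Hf r Hr) 1 Rlt_0_1) as [delta [Hdelta Hq]].
  (* near [r], the difference quotient is bounded by [|f' r| + 1], so [f] is Lipschitz there *)
  set (C := Rabs (f' r) + 1).
  assert (HC : 0 < C) by (pose proof (Rabs_pos (f' r)); unfold C; lra).
  apply filterlim_locally. intros eps.
  assert (Hpos : 0 < Rmin delta (eps / C))
    by (apply Rmin_pos; [lra|apply Rdiv_lt_0_compat; [apply cond_pos|lra]]).
  exists (mkposreal _ Hpos). intros y Hy.
  change (Rabs (y - x) < Rmin delta (eps / C)) in Hy. change (Rabs (f (clamp01 y) - f r) < eps).
  pose proof (Rmin_l delta (eps / C)). pose proof (Rmin_r delta (eps / C)).
  pose proof (clamp01_lipschitz x y) as Hlip. fold r in Hlip. pose proof (clamp01_range y).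
  set (h := clamp01 y - r) in *.
  assert (Eh : clamp01 y = r + h) by (unfold h; ring). rewrite Eh in *.
  destruct (Req_dec h 0) as [->|Hh0].
  - rewrite Rplus_0_r, Rminus_diag, Rabs_R0. apply cond_pos.
  - specialize (Hq h Hh0 ltac:(lra) ltac:(lra)).
    assert (Hquot : Rabs ((f (r + h) - f r) / h) <= C).
    { pose proof (Rabs_triang_inv ((f (r + h) - f r) / h) (f' r)). unfold C. lra. }
    replace (f (r + h) - f r) with ((f (r + h) - f r) / h * h) by (field; assumption).
    rewrite Rabs_mult. apply Rle_lt_trans with (C * Rabs h).
    + apply Rmult_le_compat_r; [apply Rabs_pos|assumption].
    + apply (Rmult_lt_reg_r (/ C)); [now apply Rinv_0_lt_compat|].
      replace (C * Rabs h * / C) with (Rabs h) by (field; lra). unfold Rdiv in *. lra.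
Qed.

(* [F] is continuous on all of [R] (the [L_i] will be extended constantly
   outside [[0,1]]); the equation is only required on [(0,1)]. *)
Record solution (d : nat) (lam : R) (F : nat -> R -> R) (D : nat -> R) : Prop := {
  solution_continuous : forall i, (i < d)%nat -> forall x, continuous (F i) x;
  solution_derive : forall i, (i < d)%nat -> forall x, 0 < x < 1 ->
    is_derive (F i) x (- sum_fun d F x * F i x - lam);
  solution_RInt : forall i, (i < d)%nat -> RInt (F i) 0 1 = D i;
  solution_init : (INR d - 1) * lam = sum_lt d (fun k => F k 0 ^ 2) - sum_fun d F 0 ^ 2
}.

Arguments solution_continuous {d lam F D}.
Arguments solution_derive {d lam F D}.
Arguments solution_RInt {d lam F D}.
Arguments solution_init {d lam F D}.

(* [d R0] bounds [sum D]; the first term bounds [d v(0)] in [sum_0_le_of_dominant]. *)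
Definition sum_bound (d : nat) (R0 : R) : R :=
  INR d * (2 * R0 * exp (INR d * (2 * R0) + INR d * R0)) + INR d * R0.

Section Solution.

Variables (d : nat) (lam : R) (F : nat -> R -> R) (D : nat -> R).
Hypothesis Hd : (2 <= d)%nat.
Hypothesis Hsol : solution d lam F D.

Local Notation S := (sum_fun d F).
Local Notation Q := (sum_fun d (fun k y => F k y ^ 2)).

Lemma INR_d_ge_2 : 2 <= INR d.
Proof. replace 2 with (INR 2) by reflexivity. now apply le_INR. Qed.

Lemma sum_continuous x : continuous S x.
Proof. apply continuous_sum_fun. intros k Hk. now apply (solution_continuous Hsol). Qed.

Lemma sum_sq_continuous x : continuous Q x.
Proof.
  apply continuous_sum_fun. intros k Hk. pose proof (solution_continuous Hsol k Hk) as Hc.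
  solve_continuous.
Qed.

Lemma sum_derive x : 0 < x < 1 -> is_derive S x (- S x ^ 2 - INR d * lam).
Proof.
  intros Hx. replace (- S x ^ 2 - INR d * lam) with (sum_fun d (fun k y => - S y * F k y - lam) x).
  - apply is_derive_sum_fun. intros k Hk. now apply (solution_derive Hsol).
  - unfold sum_fun at 1.
    rewrite (sum_lt_ext _ _ (fun k => - S x * F k x + - lam)) by (intros; ring).
    rewrite sum_lt_plus, sum_lt_scal, sum_lt_const. unfold sum_fun. ring.
Qed.

Lemma sum_sq_derive x : 0 < x < 1 -> is_derive Q x (-2 * S x * Q x - 2 * lam * S x).
Proof.
  intros Hx. replace (-2 * S x * Q x - 2 * lam * S x)
    with (sum_fun d (fun k y => 2 * F k y * (- S y * F k y - lam)) x).
  - apply is_derive_sum_fun. intros k Hk.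
    pose proof (solution_derive Hsol k Hk x Hx). derive_with_hyps. ring.
  - unfold sum_fun at 1 3.
    rewrite (sum_lt_ext _ _ (fun k => (-2 * S x) * F k x ^ 2 + (-2 * lam) * F k x))
      by (intros; ring).
    rewrite sum_lt_plus, !sum_lt_scal. unfold sum_fun. ring.
Qed.

Lemma sum_bounded : exists M, forall x, 0 <= x <= 1 -> Rabs (S x) <= M.
Proof.
  destruct (continuity_ab_maj (fun x => Rabs (S x)) 0 1) as [m [Hm _]]; [lra| |].
  - intros c _. apply continuity_pt_filterlim, continuous_Rabs_comp, sum_continuous.
  - now exists (Rabs (S m)).
Qed.

(* The defect of this identity solves [z' = -2 S z] and vanishes at [0]. *)
Lemma first_integral x : 0 <= x <= 1 -> Q x - S x ^ 2 = (INR d - 1) * lam.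
Proof.
  intros Hx. destruct sum_bounded as [M HM].
  enough (Q x - S x ^ 2 - (INR d - 1) * lam = 0) by lra.
  refine (linear_ode_eq0 (fun y => -2 * S y) (2 * M) _
            (fun y => Q y - S y ^ 2 - (INR d - 1) * lam) _ _ _ x Hx).
  - intros y Hy. rewrite Rabs_mult, Rabs_left by lra. specialize (HM y ltac:(lra)). lra.
  - intros y. pose proof (sum_continuous y). pose proof (sum_sq_continuous y). solve_continuous.
  - intros y Hy. pose proof (sum_derive y Hy). pose proof (sum_sq_derive y Hy).
    derive_with_hyps. ring.
  - rewrite (solution_init Hsol). unfold sum_fun. ring.
Qed.

Lemma neg_sq_sum_le_lambda x : 0 <= x <= 1 -> - S x ^ 2 <= INR d * lam.
Proof.
  intros Hx. pose proof INR_d_ge_2.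
  pose proof (sum_lt_Cauchy_Schwarz d (fun k => F k x)) as HCS.
  change (S x ^ 2 <= INR d * Q x) in HCS.
  assert (Hfactor : (INR d - 1) * (INR d * lam + S x ^ 2) = INR d * Q x - S x ^ 2).
  { replace ((INR d - 1) * (INR d * lam + S x ^ 2))
      with (INR d * ((INR d - 1) * lam) + (INR d - 1) * S x ^ 2) by ring.
    rewrite <- (first_integral x Hx). ring. }
  nra.
Qed.

Lemma sum_antitone x y : 0 <= x -> x <= y -> y <= 1 -> S y <= S x.
Proof.
  intros Hx Hxy Hy. apply (derive_nonpos_le S (fun t => - S t ^ 2 - INR d * lam) x y Hxy).
  - exact sum_continuous.
  - intros t Ht. apply sum_derive. lra.
  - intros t Ht. pose proof (neg_sq_sum_le_lambda t ltac:(lra)). lra.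
Qed.

Lemma is_RInt_component i : (i < d)%nat -> is_RInt (F i) 0 1 (D i).
Proof.
  intros Hi. rewrite <- (solution_RInt Hsol i Hi).
  apply (RInt_correct (V:=R_CompleteNormedModule)).
  apply (ex_RInt_continuous (V:=R_CompleteNormedModule)).
  intros; now apply (solution_continuous Hsol).
Qed.

Lemma is_RInt_sum : is_RInt S 0 1 (sum_lt d D).
Proof. apply is_RInt_sum_fun, is_RInt_component. Qed.

(* [S] is nonincreasing, so its mean [sum D] lies between [S 1] and [S 0] and is attained. *)
Lemma neg_sq_sum_D_le_lambda : - sum_lt d D ^ 2 <= INR d * lam.
Proof.
  assert (HI : RInt S 0 1 = sum_lt d D) by (apply is_RInt_unique, is_RInt_sum).
  assert (HexS : ex_RInt S 0 1) by (eexists; apply is_RInt_sum).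
  assert (H1 : S 1 <= sum_lt d D).
  { rewrite <- HI, <- (RInt_const_01 (S 1)). apply RInt_le; [lra|apply ex_RInt_const|assumption|].
    intros x Hx. apply sum_antitone; lra. }
  assert (H0 : sum_lt d D <= S 0).
  { rewrite <- HI, <- (RInt_const_01 (S 0)). apply RInt_le; [lra|assumption|apply ex_RInt_const|].
    intros x Hx. apply sum_antitone; lra. }
  destruct (IVT_gen S 0 1 (sum_lt d D)) as [r [Hr Hsr]].
  - intros x. apply continuity_pt_filterlim, sum_continuous.
  - rewrite Rmin_right, Rmax_left; lra.
  - rewrite Rmin_left, Rmax_right in Hr by lra. rewrite <- Hsr. apply neg_sq_sum_le_lambda; lra.
Qed.

Definition deviation (j : nat) (x : R) : R := F j x - S x / INR d.

Lemma deviation_continuous j : (j < d)%nat -> forall x, continuous (deviation j) x.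
Proof.
  intros Hj x. pose proof (solution_continuous Hsol j Hj). pose proof (sum_continuous x).
  unfold deviation, Rdiv. solve_continuous.
Qed.

Lemma deviation_derive j : (j < d)%nat ->
  forall x, 0 < x < 1 -> is_derive (deviation j) x (- S x * deviation j x).
Proof.
  intros Hj x Hx. pose proof (solution_derive Hsol j Hj x Hx). pose proof (sum_derive x Hx).
  pose proof INR_d_ge_2. unfold deviation, Rdiv. derive_with_hyps. field. lra.
Qed.

Lemma sum_sq_deviation x : 0 <= x <= 1 ->
  sum_lt d (fun j => deviation j x ^ 2) = (INR d - 1) / INR d * (INR d * lam + S x ^ 2).
Proof.
  intros Hx. pose proof INR_d_ge_2. pose proof (first_integral x Hx).
  unfold deviation, sum_fun in *. rewrite (sum_lt_sq_sub_mean d (fun k => F k x)) by lia.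
  replace (sum_lt d (fun k => F k x ^ 2))
    with ((INR d - 1) * lam + sum_lt d (fun k => F k x) ^ 2) by lra.
  field. lra.
Qed.

Lemma is_RInt_deviation j : (j < d)%nat ->
  is_RInt (deviation j) 0 1 (D j - sum_lt d D / INR d).
Proof.
  intros Hj. apply (is_RInt_minus (V:=R_NormedModule)); [now apply is_RInt_component|].
  unfold Rdiv. rewrite Rmult_comm.
  apply (is_RInt_ext (fun x => scal (/ INR d) (S x))).
  - intros x _. unfold scal; simpl; unfold mult; simpl. ring.
  - apply (is_RInt_scal (V:=R_NormedModule)), is_RInt_sum.
Qed.

Lemma sum_le_of_deviation_sq_le x w K : 0 <= x <= 1 -> 0 <= w -> 0 <= K ->
  - K ^ 2 <= INR d * lam ->
  (forall j, (j < d)%nat -> deviation j x ^ 2 <= w ^ 2) -> S x <= INR d * w + K.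
Proof.
  intros Hx Hw HK Hlam Hdev. pose proof INR_d_ge_2.
  assert (Hsum : (INR d - 1) / INR d * (INR d * lam + S x ^ 2) <= INR d * w ^ 2).
  { rewrite <- sum_sq_deviation, <- sum_lt_const by assumption. now apply sum_lt_le. }
  assert (Hsum' : (INR d - 1) * (INR d * lam + S x ^ 2) <= INR d * (INR d * w ^ 2)).
  { replace ((INR d - 1) * (INR d * lam + S x ^ 2))
      with (INR d * ((INR d - 1) / INR d * (INR d * lam + S x ^ 2))) by (field; lra).
    apply Rmult_le_compat_l; lra. }
  assert (Hsq : INR d * lam + S x ^ 2 <= (INR d * w) ^ 2).
  { destruct (Rle_lt_dec (INR d * lam + S x ^ 2) 0); [pose proof (pow2_ge_0 (INR d * w))|]; nra. }
  assert (0 <= INR d * w) by (apply Rmult_le_pos; lra).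
  assert (S x ^ 2 <= (INR d * w + K) ^ 2) by nra.
  destruct (Rle_lt_dec (S x) 0); nra.
Qed.

Lemma sum_0_le_of_dominant (v : R -> R) K c : 0 <= K -> - K ^ 2 <= INR d * lam ->
  (forall x, continuous v x) ->
  (forall x, 0 < x < 1 -> is_derive v x (- S x * v x)) ->
  0 < v 0 -> (forall j, (j < d)%nat -> Rabs (deviation j 0) <= v 0) ->
  RInt v 0 1 <= c -> S 0 <= INR d * (c * exp (INR d * c + K)) + K.
Proof.
  intros HK Hlam Hc Hdv Hv0 Hdom Hint. pose proof INR_d_ge_2.
  destruct sum_bounded as [M HM].
  assert (HaM : forall x, 0 < x < 1 -> Rabs (- S x) <= M)
    by (intros x Hx; rewrite Rabs_Ropp; apply HM; lra).
  assert (Hpos : forall x, 0 <= x <= 1 -> 0 < v x)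
    by exact (linear_ode_pos (fun x => - S x) M HaM v Hc Hdv Hv0).
  assert (HS : forall x, 0 <= x <= 1 -> S x <= INR d * v x + K).
  { intros x Hx. apply sum_le_of_deviation_sq_le; auto; [left; apply Hpos; lra|].
    intros j Hj. apply (linear_ode_sq_le (fun x => - S x) M HaM); auto.
    - now apply deviation_continuous.
    - now apply deviation_derive.
    - rewrite (Rabs_pos_eq (v 0)) by lra. auto. }
  assert (Hv : v 0 <= c * exp (INR d * c + K)).
  { apply (linear_ode_initial_le v S); auto; [lra|]. intros x Hx. apply HS. lra. }
  specialize (HS 0 ltac:(lra)). nra.
Qed.

Lemma sum_0_le R0 : 0 <= R0 -> (forall i, (i < d)%nat -> Rabs (D i) <= R0) ->
  S 0 <= sum_bound d R0.
Proof.
  intros HR0 HD. pose proof INR_d_ge_2. unfold sum_bound.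
  set (K := INR d * R0).
  assert (HK : 0 <= K) by (unfold K; nra).
  assert (Hlam : - K ^ 2 <= INR d * lam).
  { pose proof neg_sq_sum_D_le_lambda as HlamD.
    pose proof (sum_lt_abs_le d D R0 HD) as HDK. fold K in HDK.
    rewrite <- (pow2_abs (sum_lt d D)) in HlamD. pose proof (Rabs_pos (sum_lt d D)). nra. }
  assert (Hexp : 0 <= INR d * (2 * R0 * exp (INR d * (2 * R0) + K))).
  { pose proof (exp_pos (INR d * (2 * R0) + K)).
    apply Rmult_le_pos; [lra|]. apply Rmult_le_pos; lra. }
  destruct (exists_max_lt d (fun j => Rabs (deviation j 0))) as [i [Hi Hmax]]; [lia|].
  cbv beta in Hmax.
  destruct (Req_dec (deviation i 0) 0) as [Hz|Hnz].
  - assert (S 0 <= INR d * 0 + K).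
    { apply sum_le_of_deviation_sq_le; auto; [lra|lra|]. intros j Hj.
      specialize (Hmax j Hj). rewrite Hz, Rabs_R0 in Hmax.
      replace (deviation j 0) with 0
        by (symmetry; apply Rabs_eq_0; pose proof (Rabs_pos (deviation j 0)); lra).
      lra. }
    lra.
  - (* the dominant deviation, with its sign normalized *)
    set (sgn := Rabs (deviation i 0) / deviation i 0).
    assert (Hsgn : Rabs sgn = 1).
    { unfold sgn, Rdiv. rewrite Rabs_mult, Rabs_inv, Rabs_Rabsolu. field. now apply Rabs_no_R0. }
    assert (Hv0 : sgn * deviation i 0 = Rabs (deviation i 0)) by (unfold sgn; field; assumption).
    apply (sum_0_le_of_dominant (fun x => sgn * deviation i x)); auto.
    + intros x. pose proof (deviation_continuous i Hi x). solve_continuous.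
    + intros x Hx. pose proof (deviation_derive i Hi x Hx). derive_with_hyps. ring.
    + rewrite Hv0. now apply Rabs_pos_lt.
    + rewrite Hv0. exact Hmax.
    + replace (RInt (fun x => sgn * deviation i x) 0 1) with (sgn * (D i - sum_lt d D / INR d)).
      * eapply Rle_trans; [apply Rle_abs|]. rewrite Rabs_mult, Hsgn, Rmult_1_l.
        apply sum_lt_abs_sub_mean_le; [lia|assumption|assumption].
      * symmetry. apply is_RInt_unique.
        apply (is_RInt_scal (V:=R_NormedModule) (deviation i)), is_RInt_deviation, Hi.
Qed.

Lemma solution_reflect : solution d lam (fun i x => - F i (1 - x)) (fun i => - D i).
Proof.
  assert (Hsum : forall x, sum_fun d (fun k y => - F k (1 - y)) x = - S (1 - x))
    by (intros; apply sum_lt_opp).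
  split.
  - intros i Hi x. apply (continuous_opp (V:=R_NormedModule)).
    apply (continuous_comp (fun y => 1 - y) (F i)); [solve_continuous|].
    now apply (solution_continuous Hsol).
  - intros i Hi x Hx. rewrite Hsum.
    pose proof (solution_derive Hsol i Hi (1 - x) ltac:(lra)). derive_with_hyps. ring.
  - intros i Hi. rewrite <- (solution_RInt Hsol i Hi).
    assert (Hex : ex_RInt (F i) 0 1) by (eexists; now apply is_RInt_component).
    transitivity (RInt (F i) 1 0).
    + pose proof (RInt_comp_lin (V:=R_CompleteNormedModule) (F i) (-1) 1 0 1) as Hlin.
      replace (-1 * 0 + 1) with 1 in Hlin by ring. replace (-1 * 1 + 1) with 0 in Hlin by ring.
      rewrite <- Hlin by (now apply (ex_RInt_swap (V:=R_CompleteNormedModule))).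
      apply RInt_ext. intros x _. unfold scal; simpl; unfold mult; simpl.
      replace (-1 * x + 1) with (1 - x) by ring. ring.
    + symmetry. exact (opp_RInt_swap (V:=R_CompleteNormedModule) _ _ _ Hex).
  - rewrite Hsum, Rminus_0_r. unfold sum_fun.
    rewrite (sum_lt_ext _ _ (fun k => F k 1 ^ 2)) by (intros; ring).
    rewrite <- (first_integral 1) by lra. unfold sum_fun. ring.
Qed.

Lemma solution_bounds B : 0 <= B -> S 0 <= B -> - S 1 <= B ->
  Rabs lam <= (B + 1) ^ 2 /\
  forall i x, (i < d)%nat -> 0 <= x <= 1 -> Rabs (F i x) <= INR d * (B + 1) ^ 2 + 1.
Proof.
  intros HB H0 H1. pose proof INR_d_ge_2.
  assert (HS : forall x, 0 <= x <= 1 -> S x ^ 2 <= B ^ 2).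
  { intros x Hx. pose proof (sum_antitone 0 x ltac:(lra) ltac:(lra) ltac:(lra)).
    pose proof (sum_antitone x 1 ltac:(lra) ltac:(lra) ltac:(lra)). nra. }
  assert (Hlo : - B ^ 2 <= INR d * lam)
    by (pose proof (neg_sq_sum_le_lambda 0 ltac:(lra)); pose proof (HS 0 ltac:(lra)); lra).
  (* [S + d lam x] is nonincreasing, since [S' + d lam = - S ^ 2] *)
  assert (Hhi : S 1 + INR d * lam * 1 <= S 0 + INR d * lam * 0).
  { apply (derive_nonpos_le (fun y => S y + INR d * lam * y) (fun y => - S y ^ 2)); [lra| | |].
    - intros y. pose proof (sum_continuous y). solve_continuous.
    - intros y Hy. pose proof (sum_derive y Hy). derive_with_hyps. ring.
    - intros y Hy. pose proof (pow2_ge_0 (S y)). lra. }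
  assert (Hlam : Rabs lam <= (B + 1) ^ 2).
  { apply Rabs_le_between. destruct (Rle_lt_dec 0 lam); split; nra. }
  split; [exact Hlam|].
  intros i x Hi Hx.
  assert (HFi : F i x ^ 2 <= Q x)
    by (apply (le_sum_lt d (fun k => F k x ^ 2)); [assumption|intros; apply pow2_ge_0]).
  pose proof (first_integral x Hx). pose proof (HS x Hx).
  assert ((INR d - 1) * lam <= (INR d - 1) * (B + 1) ^ 2)
    by (apply Rmult_le_compat_l; [lra|]; apply Rabs_le_between in Hlam; lra).
  assert (Rabs (F i x) <= F i x ^ 2 + 1)
    by (rewrite <- (pow2_abs (F i x)); pose proof (pow2_ge_0 (Rabs (F i x) - 1)); nra).
  nra.
Qed.

End Solution.

Lemma sum_bound_nonneg d R0 : 0 <= R0 -> 0 <= sum_bound d R0.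
Proof.
  intros HR0. unfold sum_bound. pose proof (pos_INR d).
  pose proof (exp_pos (INR d * (2 * R0) + INR d * R0)).
  apply Rplus_le_le_0_compat; apply Rmult_le_pos; try lra. apply Rmult_le_pos; lra.
Qed.

Lemma solution_bounded d lam F D R0 : (2 <= d)%nat -> 0 <= R0 -> solution d lam F D ->
  (forall i, (i < d)%nat -> Rabs (D i) <= R0) ->
  Rabs lam <= (sum_bound d R0 + 1) ^ 2 /\
  forall i x, (i < d)%nat -> 0 <= x <= 1 ->
    Rabs (F i x) <= INR d * (sum_bound d R0 + 1) ^ 2 + 1.
Proof.
  intros Hd HR0 Hsol HD.
  apply (solution_bounds d lam F D Hd Hsol);
    [now apply sum_bound_nonneg|now apply (sum_0_le d lam F D Hd Hsol)|].
  (* the time reversal [x |-> - F (1 - x)] turns [- S 1] into the value at [0] of its sum *)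
  pose proof (sum_0_le d lam _ _ Hd (solution_reflect d lam F D Hsol) R0 HR0) as Hrefl.
  unfold sum_fun in Hrefl |- *. rewrite sum_lt_opp, Rminus_0_r in Hrefl.
  apply Hrefl. intros i Hi. rewrite Rabs_Ropp. now apply HD.
Qed.

Lemma solution_of_deriv_01 d lam (L L' : nat -> R -> R) D : (1 <= d)%nat ->
  (forall i, (i < d)%nat -> forall r, 0 <= r <= 1 -> is_deriv_01 (L i) r (L' i r)) ->
  (forall i r, (i < d)%nat -> 0 <= r <= 1 ->
     L' i r = - sum_lt d (fun k => L k r) * L i r - lam) ->
  (forall i, (i < d)%nat -> RInt (L i) 0 1 = D i) ->
  INR (d - 1) * lam = sum_lt d (fun i => L i 0 ^ 2) - sum_lt d (fun i => L i 0) ^ 2 ->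
  solution d lam (fun i x => L i (clamp01 x)) D.
Proof.
  intros Hd Hderiv Hode Hint Hinit.
  assert (Hsum : forall x, 0 <= x <= 1 ->
    sum_fun d (fun i x => L i (clamp01 x)) x = sum_lt d (fun k => L k x)).
  { intros x Hx. unfold sum_fun. apply sum_lt_ext. intros. now rewrite clamp01_id. }
  assert (H0 : clamp01 0 = 0) by (apply clamp01_id; lra).
  split.
  - intros i Hi. apply (is_deriv_01_continuous_clamp _ (L' i)). now apply Hderiv.
  - intros i Hi x Hx. rewrite Hsum, clamp01_id, <- Hode by (auto; lra).
    apply is_deriv_01_is_derive_clamp; [assumption|]. apply Hderiv; [assumption|lra].
  - intros i Hi. rewrite <- (Hint i Hi). apply RInt_ext. intros x Hx.
    rewrite Rmin_left, Rmax_right in Hx by lra. rewrite clamp01_id; lra.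
  - rewrite Hsum by lra. rewrite H0, <- Hinit, minus_INR by assumption. simpl. ring.
Qed.

Theorem lemma3p7 :
  forall (d : nat), (2 <= d)%nat ->
  forall (R0 : R), 0 < R0 ->
  exists R' : R, 0 < R' /\
    forall (Dv : nat -> R) (lam : R) (L L' : nat -> R -> R),
      (forall i, (i < d)%nat -> Rabs (Dv i) <= R0) ->
      (forall i, (i < d)%nat -> C1_01 (L i) (L' i)) ->
      INR (d - 1) * lam
        = sum_lt d (fun i => (L i 0) ^ 2) - (sum_lt d (fun i => L i 0)) ^ 2 ->
      (forall i r, (i < d)%nat -> 0 <= r <= 1 ->
         L' i r = - (sum_lt d (fun k => L k r)) * L i r - lam) ->
      (forall i, (i < d)%nat -> RInt (L i) 0 1 = Dv i) ->
      Rabs lam < R' /\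
      (forall i r, (i < d)%nat -> 0 <= r <= 1 -> Rabs (L i r) < R').
Proof.
  intros d Hd R0 HR0.
  set (B := sum_bound d R0).
  assert (HB : 0 <= B) by (apply sum_bound_nonneg; lra).
  pose proof (INR_d_ge_2 d Hd).
  exists (INR d * (B + 1) ^ 2 + 2). split; [pose proof (pow2_ge_0 (B + 1)); nra|].
  intros D lam L L' HD HC1 Hinit Hode Hint.
  assert (Hsol : solution d lam (fun i x => L i (clamp01 x)) D).
  { apply (solution_of_deriv_01 d lam L L'); [lia| |assumption..].
    intros i Hi. apply (proj1 (HC1 i Hi)). }
  destruct (solution_bounded d lam _ D R0 Hd ltac:(lra) Hsol HD) as [Hlam HL]. fold B in Hlam, HL.
  split.
  - pose proof (pow2_ge_0 (B + 1)). nra.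
  - intros i r Hi Hr. specialize (HL i r Hi Hr). cbv beta in HL.
    rewrite clamp01_id in HL by assumption. lra.
Qed.
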